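(* Let $\mathcal{K}$ be a continuous unitary representation of $\overline{\mathfrak{S}}_\infty$ in a Hilbert space $\mathcal{H}$ and let $k\in\mathbb{N}$. Then the sequence $\{\mathcal{K}((k\;\;N))\}_{N\in\mathbb{N},\,N\neq k}$ converges, as $N\to\infty$, in the weak operator topology to a self-adjoint projection $O_k$.
   Context: $\overline{\mathfrak{S}}_\infty$ is the group of all bijections of $\mathbb{N}$, with the Polish topology in which the subgroups $\mathfrak{S}(n,\infty)=\{s: s(j)=j \text{ for } j=1,\dots,n\}$ form a fundamental system of neighborhoods of the identity; continuity of $\mathcal{K}$ means $\lim_{n\to\infty}\sup_{s\in\mathfrak{S}(n,\infty)}\|\mathcal{K}(s)\eta-\eta\|=0$ for each $\eta\in\mathcal{H}$. $(k\;N)$ denotes the transposition interchanging $k$ and $N$. *)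

From mathcomp Require Import all_boot all_algebra.
From mathcomp Require Import reals.
From mathcomp Require Export complex.
Import GRing.Theory Num.Theory.
Set Implicit Arguments. Unset Strict Implicit. Unset Printing Implicit Defensive.
Local Open Scope ring_scope.

Section Hilbert.
Variables (R : realType) (H : lmodType R[i]).

Record is_inner_product (ip : H -> H -> R[i]) : Prop := {
  ip_linl : forall (a : R[i]) (x y z : H), ip (a *: x + y) z = a * ip x z + ip y z;
  ip_conjsym : forall x y : H, ip y x = ((ip x y)^*)%C;
  ip_ge0 : forall x : H, 0 <= ip x x;
  ip_def : forall x : H, ip x x = 0 -> x = 0 }.

Definition hnorm (ip : H -> H -> R[i]) (x : H) : R := Num.sqrt (complex.Re (ip x x)).

Definition hcomplete (ip : H -> H -> R[i]) : Prop :=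
  forall u : nat -> H,
    (forall eps : R, 0 < eps -> exists M, forall m n, (M <= m)%N -> (M <= n)%N ->
        hnorm ip (u m - u n) < eps) ->
    exists l : H, forall eps : R, 0 < eps -> exists M, forall n, (M <= n)%N ->
        hnorm ip (u n - l) < eps.

Definition is_hilbert (ip : H -> H -> R[i]) : Prop :=
  is_inner_product ip /\ hcomplete ip.

Definition is_linear_op (T : H -> H) : Prop :=
  forall (a : R[i]) (x y : H), T (a *: x + y) = a *: T x + T y.

Definition unitary (ip : H -> H -> R[i]) (U : H -> H) : Prop :=
  [/\ is_linear_op U, forall x y, ip (U x) (U y) = ip x y
    & forall y, exists x, U x = y].

(* Elements of the infinite symmetric group (all bijections of nat) are
   bijective functions nat -> nat; a representation K is given on them. *)
Definition unitary_rep (ip : H -> H -> R[i]) (K : (nat -> nat) -> H -> H) : Prop :=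
  [/\ forall s, bijective s -> unitary ip (K s),
      K id = id
    & forall s t, bijective s -> bijective t -> K (s \o t) = K s \o K t].

(* continuity w.r.t. the topology with neighbourhood base S(n,oo) =
   {s | s j = j for j = 0..n-1}:  lim_n sup_{s in S(n,oo)} ||K s eta - eta|| = 0 *)
Definition rep_continuous (ip : H -> H -> R[i]) (K : (nat -> nat) -> H -> H) : Prop :=
  forall (eta : H) (eps : R), 0 < eps -> exists n : nat,
    forall s, bijective s -> (forall j, (j < n)%N -> s j = j) ->
      hnorm ip (K s eta - eta) <= eps.

Definition sa_projection (ip : H -> H -> R[i]) (O : H -> H) : Prop :=
  [/\ is_linear_op O, forall x, O (O x) = O x
    & forall x y, ip (O x) y = ip x (O y)].

Definition wot_converges_away (ip : H -> H -> R[i]) (k : nat)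
    (T : nat -> H -> H) (O : H -> H) : Prop :=
  forall (x y : H) (eps : R), 0 < eps -> exists N0 : nat,
    forall N, (N0 <= N)%N -> N != k -> `|ip (T N x) y - ip (O x) y| < eps%:C%C.

End Hilbert.

Definition transp (k N : nat) : nat -> nat :=
  fun j => if j == k then N else if j == N then k else j.

From mathcomp Require Import all_boot all_order all_algebra.
From mathcomp Require Import reals complex ring zify lra.
From Stdlib Require Import FunctionalExtensionality ClassicalEpsilon.
Import Order.TTheory GRing.Theory Num.Theory Normc.

(* For N, M beyond some n > k, the transposition (k M) is the conjugate of (k N) by (N M),
   and by continuity K((N M)) moves any given vector arbitrarily little once n is large.
   Hence <K((k N))x, y> is Cauchy in N, and the Gram entries <K((k i))x, K((k j))x>, i <> j,
   all approach one value; the latter makes the Cesaro means of K((k i))x norm-Cauchy, and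
   their limit O x (which stands in for the Riesz representation of y |-> lim <K((k N))x, y>)
   is the weak limit of K((k N))x.  Linearity and self-adjointness pass to
   the weak limit because each K((k N)) is a self-adjoint unitary, and O is idempotent
   because (k N)(k M) = (k M)(N M) shows that K((k N)) O y -> O y weakly. *)

Set Implicit Arguments. Unset Strict Implicit. Unset Printing Implicit Defensive.
Local Open Scope ring_scope.
Local Open Scope complex_scope.

Ltac transp_ext := apply: functional_extensionality => t;
  rewrite /transp /comp; repeat case: eqP => //=; lia.

Lemma transpK a b : transp a b \o transp a b = id.
Proof. transp_ext. Qed.

Lemma transp_bij a b : bijective (transp a b).
Proof. by exists (transp a b) => j; have /(congr1 (@^~ j)) := transpK a b. Qed.

Lemma transp_conj k N M : N <> k -> M <> k ->
  transp k M = transp N M \o transp k N \o transp N M.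
Proof. move=> *; transp_ext. Qed.

Lemma transp_conj_disjoint k i a b : k <> a -> k <> b -> i <> a -> i <> b ->
  transp k i = transp a b \o transp k i \o transp a b.
Proof. move=> *; transp_ext. Qed.

Lemma transp_cycle k N M : N <> k -> M <> k -> N <> M ->
  transp k N \o transp k M = transp k M \o transp N M.
Proof. move=> *; transp_ext. Qed.

Lemma transp_fix a b n j : (n <= a)%N -> (n <= b)%N -> (j < n)%N -> transp a b j = j.
Proof. by rewrite /transp; repeat case: eqP => //=; lia. Qed.

Section ComplexModulus.
Variable R : realType.
Implicit Types z w : R[i].

Lemma normr_normc z : `|z| = (normc z)%:C.
Proof. by case: z => a b; rewrite normc_def. Qed.

Lemma normc_ge0 z : 0 <= normc z.
Proof. by rewrite -(@lecR R) -normr_normc; exact: normr_ge0. Qed.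

Lemma normcB z w : normc (z - w) = normc (w - z).
Proof. by rewrite -normcN opprB. Qed.

Lemma normc_conj z : normc (conjc z) = normc z.
Proof. by apply: complexI; rewrite -!normr_normc normcJ. Qed.

Lemma normc_real (r : R) : normc r%:C = `|r|.
Proof. by rewrite /normc /= expr0n addr0 sqrtr_sqr. Qed.

Lemma normc_sum (I : Type) (s : seq I) (F : I -> R[i]) :
  normc (\sum_(i <- s) F i) <= \sum_(i <- s) normc (F i).
Proof.
elim: s => [|i s IH]; first by rewrite !big_nil normc0.
by rewrite !big_cons; apply: le_trans (le_normcD _ _) _; rewrite lerD2l.
Qed.

Lemma Re_le_normc z : complex.Re z <= normc z.
Proof. by apply: le_trans (ler_norm _) _; rewrite -(@lecR R) -normr_normc normc_ge_Re. Qed.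

End ComplexModulus.

Lemma sum_ord_ltn m n : (\sum_(i < m) (i < n) = minn m n)%N.
Proof.
elim: m => [|m IH]; first by rewrite big_ord0 min0n.
by rewrite big_ord_recr /= IH; case: ltnP => ?; lia.
Qed.

Lemma sum_ord_eq m p : (\sum_(i < m) (i == p :> nat) = (p < m))%N.
Proof.
elim: m => [|m IH]; first by rewrite big_ord0.
by rewrite big_ord_recr /= IH; lia.
Qed.

Section Estimates.
Variable R : realType.

Lemma small_factor (c e : R) : 0 <= c -> 0 < e -> exists2 d, 0 < d & d * c <= e.
Proof.
move=> c_ge0 e_gt0; have c1_gt0 : 0 < c + 1 by rewrite ltr_wpDl.
exists (e / (c + 1)); first by rewrite divr_gt0.
by rewrite mulrAC ler_pdivrMr // ler_pM2l // lerDl.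
Qed.

Lemma eventually_div_lt (r e : R) : 0 < e ->
  exists M, forall m, (M <= m)%N -> r / m%:R < e.
Proof.
move=> e_gt0; exists (Num.bound (`|r| / e)).+1 => m Mm.
have m_gt0 : 0 < m%:R :> R by rewrite ltr0n; apply: leq_trans Mm.
rewrite ltr_pdivrMr //; apply: le_lt_trans (ler_norm r) _.
have := archi_boundP (divr_ge0 (normr_ge0 r) (ltW e_gt0)).
rewrite ltr_pdivrMr // => /lt_le_trans; apply.
by rewrite mulrC ler_pM2l // ler_nat ltnW.
Qed.

Definition cvgC (u : nat -> R[i]) (l : R[i]) : Prop :=
  forall e : R, 0 < e -> exists N0, forall N, (N0 <= N)%N -> normc (u N - l) < e.

Lemma cvgC_le (u v : nat -> R[i]) (l l' : R[i]) (c : R) :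
  cvgC u l -> cvgC v l' ->
  (exists N0, forall N, (N0 <= N)%N -> normc (u N - v N) <= c) ->
  normc (l - l') <= c.
Proof.
move=> ul vl' [N0 uv]; apply/ler_addgt0Pr => e e_gt0.
have [N1 hu] := ul (e / 2%:R) (divr_gt0 e_gt0 (ltr0Sn _ 1)).
have [N2 hv] := vl' (e / 2%:R) (divr_gt0 e_gt0 (ltr0Sn _ 1)).
set N := (N0 + N1 + N2)%N.
have := uv N ltac:(lia); have := hu N ltac:(lia); have := hv N ltac:(lia).
have -> : l - l' = - (u N - l) + (u N - v N) + (v N - l') by ring.
have := le_normcD (- (u N - l) + (u N - v N)) (v N - l').
have := le_normcD (- (u N - l)) (u N - v N); rewrite normcN.
lra.
Qed.

Lemma cvgC_unique u (l l' : R[i]) : cvgC u l -> cvgC u l' -> l = l'.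
Proof.
move=> ul ul'; apply/subr0_eq/eq0_normc/le_anti; rewrite normc_ge0 andbT.
by apply: (cvgC_le ul ul'); exists 0%N => N _; rewrite subrr normc0.
Qed.

Lemma cvgC_cst (l : R[i]) : cvgC (fun=> l) l.
Proof. by move=> e e_gt0; exists 0%N => N _; rewrite subrr normc0. Qed.

Lemma cvgC_conj u l : cvgC u l -> cvgC (fun N => conjc (u N)) (conjc l).
Proof.
move=> ul e /ul [N0 near]; exists N0 => N /near.
by rewrite -rmorphB normc_conj.
Qed.

Lemma cvgC_lin a u v l l' : cvgC u l -> cvgC v l' ->
  cvgC (fun N => a * u N + v N) (a * l + l').
Proof.
move=> ul vl' e e_gt0.
have [d d_gt0 de] := small_factor (addr_ge0 (normc_ge0 a) ler01) e_gt0.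
have [N1 hu] := ul d d_gt0; have [N2 hv] := vl' d d_gt0.
exists (N1 + N2)%N => N le_N; have := hu N (leq_trans (leq_addr _ _) le_N).
have := hv N (leq_trans (leq_addl _ _) le_N).
have -> : a * u N + v N - (a * l + l') = a * (u N - l) + (v N - l') by ring.
have := le_normcD (a * (u N - l)) (v N - l'); rewrite normcM.
have := normc_ge0 a; have := normc_ge0 (u N - l); nra.
Qed.

Definition avg (m : nat) (f : nat -> R[i]) : R[i] := (m%:R)^-1 * \sum_(i < m) f i.

Lemma normc_avg_dev m f c : (0 < m)%N ->
  normc (avg m f - c) <= (m%:R)^-1 * \sum_(i < m) normc (f i - c).
Proof.
move=> m_gt0; have m_neq0 : m%:R != 0 :> R[i] by rewrite pnatr_eq0 -lt0n.
have -> : avg m f - c = (m%:R)^-1 * \sum_(i < m) (f i - c).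
  by rewrite /avg sumrB mulrBr sumr_const card_ord -[c *+ m]mulr_natl mulrA mulVf // mul1r.
have -> : (m%:R : R[i])^-1 = ((m%:R : R)^-1)%:C by rewrite fmorphV rmorph_nat.
rewrite normcM normc_real ger0_norm ?invr_ge0 ?ler0n //.
by rewrite ler_wpM2l ?invr_ge0 ?ler0n ?normc_sum.
Qed.

Lemma avg_dev_le m f c b : (0 < m)%N -> (forall i, normc (f i - c) <= b) ->
  normc (avg m f - c) <= b.
Proof.
move=> m_gt0 fb; apply: le_trans (normc_avg_dev _ _ m_gt0) _.
rewrite ler_pdivrMl ?ltr0n //; apply: le_trans (ler_sum _ (fun (i : 'I_m) _ => fb i)) _.
by rewrite sumr_const card_ord mulr_natl.
Qed.

Lemma avg_dev_le_except m f c a b n p : (0 < m)%N -> 0 <= a ->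
  (forall i, normc (f i - c) <= b) ->
  (forall i, (n <= i)%N -> i != p -> normc (f i - c) <= a) ->
  normc (avg m f - c) <= a + b * n.+1%:R / m%:R.
Proof.
move=> m_gt0 a_ge0 fb fa; have b_ge0 := le_trans (normc_ge0 _) (fb 0%N).
apply: le_trans (normc_avg_dev _ _ m_gt0) _.
have term i : normc (f i - c) <= a + b * ((i < n)%N + (i == p))%:R.
  case: (ltnP i n) => [_|le_ni]; last case: (eqVneq i p) => [_|ne_ip].
  - by apply: le_trans (fb i) _; rewrite ler_wpDl // ler_peMr // ler1n.
  - by apply: le_trans (fb i) _; rewrite ler_wpDl // ler_peMr // addn1.
  - by rewrite ler_wpDr ?fa ?mulr_ge0.
rewrite ler_pdivrMl ?ltr0n //; apply: le_trans (ler_sum _ (fun (i : 'I_m) _ => term i)) _.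
rewrite big_split /= sumr_const card_ord -mulr_sumr -natr_sum big_split /=.
rewrite sum_ord_ltn sum_ord_eq mulrDr mulr_natl lerD2l mulrCA mulfV ?pnatr_eq0 -?lt0n //.
by rewrite mulr1 ler_wpM2l // ler_nat; lia.
Qed.

Lemma avg2_dev_le m m' f c a b n : (0 < m)%N -> (0 < m')%N -> 0 <= a ->
  (forall i j, normc (f i j - c) <= b) ->
  (forall i j, (n <= i)%N -> (n <= j)%N -> i != j -> normc (f i j - c) <= a) ->
  normc (avg m (fun i => avg m' (f i)) - c)
    <= a + b * n.+1%:R / m'%:R + b * n.+1%:R / m%:R.
Proof.
move=> m_gt0 m'_gt0 a_ge0 fb fa; have b_ge0 := le_trans (normc_ge0 _) (fb 0%N 0%N).
apply: (avg_dev_le_except (p := 0%N)) => // [|i|i le_ni _].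
- by rewrite addr_ge0 // !mulr_ge0 ?invr_ge0 ?ler0n.
- exact: avg_dev_le.
- by apply: (avg_dev_le_except (p := i)) => // j le_nj; rewrite eq_sym; apply: fa.
Qed.

End Estimates.

Section InnerProduct.
Variables (R : realType) (H : lmodType R[i]) (ip : H -> H -> R[i]).
Hypothesis ipP : is_inner_product ip.
Local Notation hn := (hnorm ip).
Implicit Types (x y z : H) (a : R[i]).

Lemma ip0l z : ip 0 z = 0.
Proof.
have := ip_linl ipP 1 0 0 z; rewrite scale1r addr0 mul1r.
by move/(congr1 (fun w => w - ip 0 z)); rewrite subrr addrK.
Qed.

Lemma ipDl x y z : ip (x + y) z = ip x z + ip y z.
Proof. by rewrite -[x in LHS]scale1r (ip_linl ipP) mul1r. Qed.

Lemma ipZl a x z : ip (a *: x) z = a * ip x z.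
Proof. by rewrite -[a *: x]addr0 (ip_linl ipP) ip0l addr0. Qed.

Lemma ipBl x y z : ip (x - y) z = ip x z - ip y z.
Proof. by rewrite addrC -scaleN1r (ip_linl ipP) mulN1r addrC. Qed.

Lemma ip0r z : ip z 0 = 0.
Proof. by rewrite (ip_conjsym ipP) ip0l conjc0. Qed.

Lemma ipDr x y z : ip z (x + y) = ip z x + ip z y.
Proof. by rewrite (ip_conjsym ipP) ipDl rmorphD /= -!(ip_conjsym ipP). Qed.

Lemma ipZr a x z : ip z (a *: x) = conjc a * ip z x.
Proof. by rewrite (ip_conjsym ipP) ipZl rmorphM /= -(ip_conjsym ipP). Qed.

Lemma ipBr x y z : ip z (x - y) = ip z x - ip z y.
Proof. by rewrite (ip_conjsym ipP) ipBl rmorphB /= -!(ip_conjsym ipP). Qed.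

Lemma ip_suml (I : Type) (s : seq I) (F : I -> H) z :
  ip (\sum_(i <- s) F i) z = \sum_(i <- s) ip (F i) z.
Proof. exact: (big_morph (ip^~ z) (fun x y => ipDl x y z) (ip0l z)). Qed.

Lemma ip_sumr (I : Type) (s : seq I) (F : I -> H) z :
  ip z (\sum_(i <- s) F i) = \sum_(i <- s) ip z (F i).
Proof. exact: (big_morph (ip z) (fun x y => ipDr x y z) (ip0r z)). Qed.

Lemma ip_ext x y : (forall z, ip x z = ip y z) -> x = y.
Proof. by move=> eq_xy; apply/subr0_eq/(ip_def ipP); rewrite ipBl eq_xy subrr. Qed.

Lemma ipxx_real x : ip x x = (complex.Re (ip x x))%:C.
Proof. by rewrite RRe_real // realE (ip_ge0 ipP). Qed.

Lemma hnorm_ge0 x : 0 <= hn x.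
Proof. exact: sqrtr_ge0. Qed.

Lemma hnorm_sqr x : hn x ^+ 2 = complex.Re (ip x x).
Proof. by rewrite sqr_sqrtr // -(@lecR R) -ipxx_real (ip_ge0 ipP). Qed.

Lemma hnorm_lt x e : 0 < e -> complex.Re (ip x x) < e ^+ 2 -> hn x < e.
Proof. by move=> e_gt0; rewrite -hnorm_sqr ltr_pXn2r // ?nnegrE ?hnorm_ge0 ?ltW. Qed.

Lemma Cauchy_Schwarz x y : normc (ip x y) <= hn x * hn y.
Proof.
have sq_le : `|ip x y| ^+ 2 <= ip x x * ip y y.
  have [/(ip_def ipP) ->|yy_neq0] := eqVneq (ip y y) 0.
    by rewrite !ip0r normr0 expr0n mulr0.
  have yy_gt0 : 0 < ip y y by rewrite lt_def yy_neq0 (ip_ge0 ipP).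
  have := ip_ge0 ipP (ip y y *: x - ip x y *: y).
  rewrite !ipBl !ipBr !ipZl !ipZr -!(ip_conjsym ipP).
  have -> : ip y y * (ip y y * ip x x) - ip y y * (ip y x * ip x y)
      - (ip x y * (ip y y * ip y x) - ip x y * (ip y x * ip y y))
      = ip y y * (ip y y * ip x x - ip x y * ip y x) by ring.
  by rewrite pmulr_rge0 // subr_ge0 sqr_normc -(ip_conjsym ipP) [ip x x * _]mulrC.
rewrite -(@ler_pXn2r _ 2) ?nnegrE ?normc_ge0 ?mulr_ge0 ?hnorm_ge0 //.
by rewrite exprMn !hnorm_sqr -(@lecR R) rmorphXn rmorphM /= -normr_normc -!ipxx_real.
Qed.

Lemma ip_perturb x x' y y' :
  normc (ip x' y' - ip x y) <= hn (x' - x) * hn y' + hn x * hn (y' - y).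
Proof.
have -> : ip x' y' - ip x y = ip (x' - x) y' + ip x (y' - y).
  by rewrite ipBl ipBr addrA subrK.
by apply: le_trans (le_normcD _ _) _; apply: lerD; apply: Cauchy_Schwarz.
Qed.

Definition hcauchy (u : nat -> H) : Prop :=
  forall eps : R, 0 < eps -> exists M, forall m n, (M <= m)%N -> (M <= n)%N ->
    hn (u m - u n) < eps.

Definition hcvg (u : nat -> H) (v : H) : Prop :=
  forall eps : R, 0 < eps -> exists M, forall m, (M <= m)%N -> hn (u m - v) < eps.

Lemma cauchy_of_gram (u : nat -> H) :
  (forall e : R, 0 < e -> exists c M, forall p q, (M <= p)%N -> (M <= q)%N ->
     normc (ip (u p) (u q) - c) <= e) ->
  hcauchy u.
Proof.
move=> gram_cvg eps eps_gt0.
have [c [M gramM]] := gram_cvg (eps ^+ 2 / 8%:R) ltac:(by rewrite divr_gt0 ?exprn_gt0).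
exists M => m n Mm Mn; apply: hnorm_lt => //.
set a := ip (u m) (u m) - c; set b := ip (u m) (u n) - c.
set b' := ip (u n) (u m) - c; set a' := ip (u n) (u n) - c.
have -> : ip (u m - u n) (u m - u n) = a - b - b' + a'.
  by rewrite /a /b /b' /a' !ipBl !ipBr; ring.
have := Re_le_normc (a - b - b' + a').
have := le_normcD (a - b - b') a'; have := le_normcD (a - b) (- b').
have := le_normcD a (- b); rewrite !normcN.
have := gramM m m Mm Mm; have := gramM m n Mm Mn.
have := gramM n m Mn Mm; have := gramM n n Mn Mn.
have : 0 < eps ^+ 2 by rewrite exprn_gt0.
lra.
Qed.

Definition vavg (m : nat) (u : nat -> H) : H := (m%:R)^-1 *: \sum_(i < m) u i.

Lemma ip_vavgl m u y : ip (vavg m u) y = avg m (fun i => ip (u i) y).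
Proof. by rewrite /vavg ipZl ip_suml. Qed.

Lemma ip_vavgr m u y : ip y (vavg m u) = avg m (fun i => ip y (u i)).
Proof. by rewrite /vavg ipZr ip_sumr conjc_inv conjc_nat. Qed.

Lemma ip_vavg m m' u w :
  ip (vavg m u) (vavg m' w) = avg m (fun i => avg m' (fun j => ip (u i) (w j))).
Proof.
rewrite ip_vavgl /avg; congr (_ * _).
by apply: eq_bigr => i _; rewrite ip_vavgr.
Qed.

Lemma cvgC_ip_hcvg (u : nat -> H) v y :
  hcvg u v -> cvgC (fun m => ip (u m) y) (ip v y).
Proof.
move=> cvg_v e e_gt0.
have [d d_gt0 de] := small_factor (hnorm_ge0 y) (divr_gt0 e_gt0 (ltr0Sn _ 1)).
have [M near] := cvg_v d d_gt0; exists M => m /near lt_d.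
rewrite -ipBl; apply: le_lt_trans (Cauchy_Schwarz _ _) _.
have := hnorm_ge0 y; nra.
Qed.

End InnerProduct.

Section Representation.
Variables (R : realType) (H : lmodType R[i]) (ip : H -> H -> R[i]).
Variables (K : (nat -> nat) -> H -> H) (k : nat).
Hypotheses (ipP : is_inner_product ip) (repP : unitary_rep ip K)
  (contP : rep_continuous ip K).
Local Notation hn := (hnorm ip).
Local Notation T a b := (K (transp a b)).

Lemma T_unitary a b : unitary ip (T a b).
Proof. by case: repP => unit _ _; apply/unit/transp_bij. Qed.

Lemma T_linear a b : is_linear_op (T a b).
Proof. by case: (T_unitary a b). Qed.

Lemma T_ip a b x y : ip (T a b x) (T a b y) = ip x y.
Proof. by case: (T_unitary a b). Qed.

Lemma T_hnorm a b x : hn (T a b x) = hn x.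
Proof. by rewrite /hnorm T_ip. Qed.

Lemma TB a b x y : T a b (x - y) = T a b x - T a b y.
Proof. by rewrite addrC -scaleN1r (T_linear a b) scaleN1r addrC. Qed.

Lemma K_transp_comp a b c d x : K (transp a b \o transp c d) x = T a b (T c d x).
Proof. by case: repP => _ _ mul; rewrite mul //; apply: transp_bij. Qed.

Lemma T_invol a b x : T a b (T a b x) = x.
Proof. by rewrite -K_transp_comp transpK; case: repP => _ -> _. Qed.

Lemma T_adj a b x y : ip (T a b x) y = ip x (T a b y).
Proof. by rewrite -{1}(T_invol a b y) T_ip. Qed.

Lemma K_transp_comp3 a b c d x :
  K (transp a b \o transp c d \o transp a b) x = T a b (T c d (T a b x)).
Proof.
case: repP => _ _ mul.
by rewrite mul /= ?K_transp_comp //; [apply: bij_comp|]; apply: transp_bij.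
Qed.

Lemma T_conj N M x : N <> k -> M <> k -> T k M x = T N M (T k N (T N M x)).
Proof. by move=> ? ?; rewrite -K_transp_comp3 -transp_conj. Qed.

Lemma T_conj_disjoint i a b x : k <> a -> k <> b -> i <> a -> i <> b ->
  T k i x = T a b (T k i (T a b x)).
Proof. by move=> ? ? ? ?; rewrite -K_transp_comp3 -transp_conj_disjoint. Qed.

Lemma T_cycle N M x : N <> k -> M <> k -> N <> M ->
  T k N (T k M x) = T k M (T N M x).
Proof. by move=> ? ? ?; rewrite -!K_transp_comp transp_cycle. Qed.

Definition nearly_fixed (n : nat) (d : R) (x : H) : Prop :=
  forall a b, (n <= a)%N -> (n <= b)%N -> hn (T a b x - x) <= d.

Lemma nearly_fixedW n n' d x :
  (n <= n')%N -> nearly_fixed n d x -> nearly_fixed n' d x.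
Proof.
move=> le_nn' fix_x a b na nb.
by apply: fix_x; [exact: leq_trans na | exact: leq_trans nb].
Qed.

Lemma nearly_fixed_eventually x d : 0 < d ->
  exists n, (k < n)%N /\ nearly_fixed n d x.
Proof.
move=> d_gt0; have [n0 near] := contP x d_gt0.
exists (maxn n0 k.+1); split=> [|a b]; first by rewrite leq_max ltnSn orbT.
rewrite !geq_max => /andP[n0a _] /andP[n0b _].
by apply: near => [|j]; [exact: transp_bij | apply: transp_fix].
Qed.

Lemma T_weak_cauchy x y d n N M : (k < n)%N ->
  nearly_fixed n d x -> nearly_fixed n d y -> (n <= N)%N -> (n <= M)%N ->
  normc (ip (T k M x) y - ip (T k N x) y) <= d * hn y + hn x * d.
Proof.
move=> lt_kn fix_x fix_y le_nN le_nM.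
have [Nk Mk] : N <> k /\ M <> k by lia.
rewrite (T_conj x Nk Mk) T_adj.
apply: le_trans (ip_perturb ipP _ _ _ _) _.
rewrite -TB !T_hnorm; apply: lerD.
  by apply: ler_wpM2r; [exact: hnorm_ge0 | exact: fix_x].
by apply: ler_wpM2l; [exact: hnorm_ge0 | exact: fix_y].
Qed.

Definition gram x i j := ip (T k i x) (T k j x).

Lemma gram_bounded x i j : normc (gram x i j) <= hn x ^+ 2.
Proof. by apply: le_trans (Cauchy_Schwarz ipP _ _) _; rewrite !T_hnorm expr2. Qed.

Lemma gram_step x d n i j j' : (k < n)%N -> nearly_fixed n d x ->
  (n <= i)%N -> (n <= j)%N -> (n <= j')%N -> i != j -> i != j' ->
  normc (gram x i j' - gram x i j) <= d * hn x + hn x * d.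
Proof.
move=> lt_kn fix_x le_ni le_nj le_nj' ne_ij ne_ij'.
have [jk j'k] : j <> k /\ j' <> k by lia.
have [kj kj' ij ij'] : [/\ k <> j, k <> j', i <> j & i <> j'] by split; lia.
rewrite /gram (T_conj x jk j'k) {1}(T_conj_disjoint x kj kj' ij ij').
rewrite T_ip; apply: le_trans (ip_perturb ipP _ _ _ _) _.
rewrite -!TB !T_hnorm; apply: lerD.
  by apply: ler_wpM2r; [exact: hnorm_ge0 | exact: fix_x].
by apply: ler_wpM2l; [exact: hnorm_ge0 | exact: fix_x].
Qed.

Lemma gram_near_const x d n i j i' j' : (k < n)%N -> nearly_fixed n d x ->
  (n <= i)%N -> (n <= j)%N -> (n <= i')%N -> (n <= j')%N -> i != j -> i' != j' ->
  normc (gram x i j - gram x i' j') <= (d * hn x + hn x * d) *+ 3.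
Proof.
move=> lt_kn fix_x le_ni le_nj le_ni' le_nj' ne_ij ne_ij'.
set m := (i + j + i' + j').+1.
have step1 : normc (gram x i m - gram x i j) <= d * hn x + hn x * d.
  by apply: (gram_step lt_kn fix_x); lia.
have step2 : normc (gram x m i - gram x m i') <= d * hn x + hn x * d.
  by apply: (gram_step lt_kn fix_x); lia.
have step3 : normc (gram x i' j' - gram x i' m) <= d * hn x + hn x * d.
  by apply: (gram_step lt_kn fix_x); lia.
have sym a b : gram x a b = conjc (gram x b a) by exact: (ip_conjsym ipP).
rewrite normcB in step1; rewrite -normc_conj rmorphB /= -!sym in step2.
rewrite normcB in step3.
have -> : gram x i j - gram x i' j'
    = (gram x i j - gram x i m) + (gram x i m - gram x i' m) + (gram x i' m - gram x i' j').
  by ring.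
have := le_normcD (gram x i j - gram x i m + (gram x i m - gram x i' m)) (gram x i' m - gram x i' j').
have := le_normcD (gram x i j - gram x i m) (gram x i m - gram x i' m).
lra.
Qed.

Definition weak_limit (x v : H) : Prop :=
  forall y, cvgC (fun N => ip (T k N x) y) (ip v y).

Definition cesaro x m := vavg m (fun i => T k i x).

Lemma cesaro_cauchy x : hcauchy ip (cesaro x).
Proof.
apply: (cauchy_of_gram ipP) => e e_gt0; set hx := hn x.
have hx_ge0 : 0 <= hx := hnorm_ge0 ip x.
have [d d_gt0 small_d] := small_factor (mulrn_wge0 18 hx_ge0) e_gt0.
have [n [lt_kn fix_x]] := nearly_fixed_eventually x d_gt0.
have [M small_M] := eventually_div_lt (hx ^+ 2 *+ 2 * n.+1%:R) (divr_gt0 e_gt0 (ltr0Sn _ 2)).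
(* all off-diagonal Gram entries beyond n lie near gram x n n.+1 *)
exists (gram x n n.+1), M.+1 => p q lt_Mp lt_Mq.
rewrite /cesaro (ip_vavg ipP).
apply: le_trans (avg2_dev_le (a := (d * hx + hx * d) *+ 3) (b := hx ^+ 2 *+ 2) (n := n) _ _ _ _ _) _.
- exact: leq_trans lt_Mp.
- exact: leq_trans lt_Mq.
- by rewrite mulrn_wge0 // addr_ge0 // mulr_ge0 // ltW.
- move=> i j; apply: le_trans (le_normcD _ _) _; rewrite normcN mulr2n.
  by apply: lerD; apply: gram_bounded.
- by move=> i j le_ni le_nj ne_ij; apply: (gram_near_const lt_kn fix_x) => //; lia.
have := small_M p (ltnW lt_Mp); have := small_M q (ltnW lt_Mq).
lra.
Qed.

Lemma cesaro_weak_limit x v : hcvg ip (cesaro x) v -> weak_limit x v.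
Proof.
move=> cvg_v y e e_gt0; set hx := hn x; set hy := hn y.
have [hx_ge0 hy_ge0] : 0 <= hx /\ 0 <= hy by split; apply: hnorm_ge0.
have [d d_gt0 small_d] := small_factor (mulrn_wge0 4 (addr_ge0 hx_ge0 hy_ge0)) e_gt0.
have [n1 [lt_kn1 fix_x]] := nearly_fixed_eventually x d_gt0.
have [n2 [_ fix_y]] := nearly_fixed_eventually y d_gt0.
set n := maxn n1 n2.
have lt_kn : (k < n)%N by rewrite leq_max lt_kn1.
exists n => N le_nN.
have [M small_M] := eventually_div_lt (hx * hy *+ 2 * n.+1%:R) (divr_gt0 e_gt0 (ltr0Sn _ 3)).
suff : normc (ip v y - ip (T k N x) y) <= e / 4%:R + e / 4%:R by rewrite normcB; lra.
apply: (cvgC_le (cvgC_ip_hcvg ipP y cvg_v) (cvgC_cst _)); exists M.+1 => m lt_Mm.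
rewrite /cesaro (ip_vavgl ipP).
apply: le_trans (avg_dev_le_except (a := d * hy + hx * d) (b := hx * hy *+ 2) (n := n) (p := 0%N) _ _ _ _) _.
- exact: leq_trans lt_Mm.
- by rewrite addr_ge0 // mulr_ge0 // ltW.
- move=> i; apply: le_trans (le_normcD _ _) _; rewrite normcN mulr2n.
  by apply: lerD; apply: le_trans (Cauchy_Schwarz ipP _ _) _; rewrite T_hnorm.
- move=> i le_ni _; apply: (T_weak_cauchy lt_kn) => //.
    exact: nearly_fixedW (leq_maxl _ _) fix_x.
  exact: nearly_fixedW (leq_maxr _ _) fix_y.
have := small_M m (ltnW lt_Mm); lra.
Qed.

Lemma weak_limit_operator : hcomplete ip -> exists O, forall x, weak_limit x (O x).
Proof.
move=> complete.
have limit x : exists v, weak_limit x v.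
  have [v cvg_v] := complete _ (cesaro_cauchy x).
  by exists v; apply: cesaro_weak_limit.
exists (fun x => proj1_sig (constructive_indefinite_description _ (limit x))).
by move=> x; case: constructive_indefinite_description.
Qed.

Section WeakLimit.
Variable O : H -> H.
Hypothesis O_weak : forall x, weak_limit x (O x).

Lemma O_adjoint x y : ip (O x) y = ip x (O y).
Proof.
apply: (cvgC_unique (O_weak x y)) => e /(cvgC_conj (O_weak y x)) [N0 near].
by exists N0 => N /near; rewrite -!(ip_conjsym ipP) T_adj.
Qed.

Lemma O_linear : is_linear_op O.
Proof.
move=> a x x'; apply: (ip_ext ipP) => y; rewrite (ip_linl ipP).
apply: (cvgC_unique (O_weak (a *: x + x') y)).
move=> e /(cvgC_lin a (O_weak x y) (O_weak x' y)) [N0 near].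
by exists N0 => N /near; rewrite (T_linear k N) (ip_linl ipP).
Qed.

Lemma weak_limit_O y : weak_limit (O y) (O y).
Proof.
move=> z e e_gt0.
have [d d_gt0 small_d] := small_factor (hnorm_ge0 ip z) (divr_gt0 e_gt0 (ltr0Sn _ 1)).
have [n [lt_kn fix_y]] := nearly_fixed_eventually y d_gt0.
exists n => N le_nN; rewrite T_adj.
suff : normc (ip (O y) (T k N z) - ip (O y) z) <= d * hn z by lra.
apply: (cvgC_le (O_weak y (T k N z)) (O_weak y z)).
exists (maxn n N.+1) => M; rewrite geq_max => /andP[le_nM lt_NM].
have [Nk Mk NM] : [/\ N <> k, M <> k & N <> M] by split; lia.
rewrite -T_adj T_cycle // -(ipBl ipP) -TB.
apply: le_trans (Cauchy_Schwarz ipP _ _) _; rewrite T_hnorm.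
by apply: ler_wpM2r; [exact: hnorm_ge0 | exact: fix_y].
Qed.

Lemma O_idem y : O (O y) = O y.
Proof. by apply: (ip_ext ipP) => z; apply: cvgC_unique (O_weak (O y) z) (weak_limit_O y z). Qed.

End WeakLimit.

End Representation.

Theorem lemma4 (R : realType) (H : lmodType R[i]) (ip : H -> H -> R[i])
    (K : (nat -> nat) -> H -> H) (k : nat) :
  is_hilbert ip -> unitary_rep ip K -> rep_continuous ip K ->
  exists O : H -> H, sa_projection ip O /\
    wot_converges_away ip k (fun N => K (transp k N)) O.
Proof.
move=> [ipP complete] repP contP.
have [O O_weak] := weak_limit_operator k ipP repP contP complete.
exists O; split; first split=> [a x x'|x|x y].
- exact: (O_linear ipP repP O_weak a x x').
- exact: (O_idem ipP repP contP O_weak x).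
- exact: (O_adjoint ipP repP O_weak x y).
move=> x y e /(O_weak x y) [N0 near]; exists N0 => N /near lt_e _.
by rewrite normr_normc ltcR.
Qed.
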